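(* For every integer $k\ge2$ and $\varepsilon>0$ there is $\delta=\delta(\varepsilon,k,\Omega)>0$ such that for all sufficiently large $n$ the following holds. Let $\mu\in\mathcal P(\Omega^n)$ be $\delta$-regular with respect to a partition $\vec V=(V_1,\dots,V_m)$ of $[n]$ and set $\bar\mu_i=\langle\boldsymbol\sigma[\cdot|V_i]\rangle_\mu\in\mathcal P(\Omega)$ for $i\in[m]$. If $\sum_{i\in[m]}\frac{|V_i|}{n}\langle\|\boldsymbol\sigma[\cdot|V_i]-\bar\mu_i\|_{TV}\rangle_\mu<\delta$, then $\mu$ is $(\varepsilon,k)$-symmetric.
   Context: $\Omega$ is a fixed finite nonempty set, $\mathcal P(\mathcal X)$ the set of probability measures on a finite set $\mathcal X$, $\|\cdot\|_{TV}$ total variation. For $\sigma\in\Omega^n$, nonempty $S\subset[n]$ and $\omega\in\Omega$, $\sigma[\omega|S]=|\sigma^{-1}(\omega)\cap S|/|S|$; $\langle X(\boldsymbol\sigma)\rangle_\mu=\sum_\sigma\mu(\sigma)X(\sigma)$ (applied coordinatewise to vector-valued $X$). $\mu$ is $\delta$-regular on $U\subset[n]$ if for every $S\subset U$ with $|S|\ge\delta|U|$, $\langle\|\boldsymbol\sigma[\cdot|S]-\boldsymbol\sigma[\cdot|U]\|_{TV}\rangle_\mu<\delta$; $\mu$ is $\delta$-regular with respect to $\vec V$ if there is $J\subset[m]$ with $\sum_{i\notin J}|V_i|<\delta n$ such that $\mu$ is $\delta$-regular on $V_i$ for all $i\in J$. For $x_1,\dots,x_k\in[n]$ let $\mu_{\downarrow\{x_1,\dots,x_k\}}$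 be the joint law of $(\boldsymbol\sigma(x_1),\dots,\boldsymbol\sigma(x_k))$ and $\mu_{\downarrow x}$ the law of $\boldsymbol\sigma(x)$, $\boldsymbol\sigma\sim\mu$. $\mu$ is $(\varepsilon,k)$-symmetric if $\frac1{n^k}\sum_{x_1,\dots,x_k\in[n]}\|\mu_{\downarrow\{x_1,\dots,x_k\}}-\mu_{\downarrow x_1}\otimes\cdots\otimes\mu_{\downarrow x_k}\|_{TV}<\varepsilon$. *)

From HB Require Import structures.
From mathcomp Require Import all_boot all_order all_algebra.
From mathcomp Require Import reals.
Set Implicit Arguments. Unset Strict Implicit. Unset Printing Implicit Defensive.
Import Order.TTheory GRing.Theory Num.Theory.
Local Open Scope ring_scope.

Section Defs.
Variables (R : realType) (Omega : finType).

Definition config (n : nat) := {ffun 'I_n -> Omega}.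

Definition is_prob (T : finType) (mu : T -> R) : Prop :=
  (forall x, 0 <= mu x) /\ \sum_(x : T) mu x = 1.

Definition tv (T : finType) (p q : T -> R) : R :=
  2^-1 * \sum_(x : T) `|p x - q x|.

Definition expect (T : finType) (mu : T -> R) (X : T -> R) : R :=
  \sum_(s : T) mu s * X s.

Definition sfrac n (s : config n) (S : {set 'I_n}) (w : Omega) : R :=
  #|[set x in S | s x == w]|%:R / #|S|%:R.

Definition regular_on n (mu : config n -> R) (delta : R) (U : {set 'I_n}) :=
  forall S : {set 'I_n}, S \subset U -> delta * #|U|%:R <= #|S|%:R ->
    expect mu (fun s => tv (sfrac s S) (sfrac s U)) < delta.

Definition is_partition n m (V : 'I_m -> {set 'I_n}) : Prop :=
  (forall i, V i != set0) /\
  (forall i j, i != j -> [disjoint V i & V j]) /\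
  (\bigcup_(i < m) V i = [set: 'I_n]).

Definition regular_wrt n m (mu : config n -> R) (delta : R)
  (V : 'I_m -> {set 'I_n}) : Prop :=
  exists J : {set 'I_m},
    \sum_(i < m | i \notin J) #|V i|%:R < delta * n%:R /\
    forall i, i \in J -> regular_on mu delta (V i).

Definition joint n k (mu : config n -> R) (x : {ffun 'I_k -> 'I_n})
  (t : {ffun 'I_k -> Omega}) : R :=
  \sum_(s : config n | [forall j, s (x j) == t j]) mu s.

Definition marg n (mu : config n -> R) (y : 'I_n) (w : Omega) : R :=
  \sum_(s : config n | s y == w) mu s.

Definition prod_marg n k (mu : config n -> R) (x : {ffun 'I_k -> 'I_n})
  (t : {ffun 'I_k -> Omega}) : R :=
  \prod_(j < k) marg mu (x j) (t j).

Definition eps_k_symmetric n (mu : config n -> R) (eps : R) (k : nat) : Prop :=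
  (n%:R ^+ k)^-1 *
    \sum_(x : {ffun 'I_k -> 'I_n}) tv (joint mu x) (prod_marg mu x) < eps.

End Defs.

Arguments sfrac {R Omega n}.
Arguments tv {R T}.
Arguments expect {R T}.
Arguments is_prob {R T}.

From HB Require Import structures.
From mathcomp Require Import all_boot all_order all_algebra.
From mathcomp Require Import reals.
From mathcomp Require Import ring lra.
Set Implicit Arguments. Unset Strict Implicit. Unset Printing Implicit Defensive.
Import Order.TTheory GRing.Theory Num.Theory.
Local Open Scope ring_scope.

(* For g : config -> [0,1], [bias g v w q] = E[g 1{σ(v) = w}] - E[g] q measures how
   far the law of σ(v), reweighted by g, is from q(w).  Telescoping over the
   coordinates of x = (x_1, ..., x_k), with g the indicator that σ(x_l) = t_l for all
   l < j, bounds the distance between the joint law of σ(x_1), ..., σ(x_k) and the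
   product of the block means μ̄ by a sum of k biases; the product of the marginals is
   compared with the same product in the same way.
   On a δ-regular block U the biases summed over any S ⊆ U equal
   |S| E[g (σ[w|S] - μ̄(w))], which is at most 2(δ + e)|U| with e = E‖σ[·|U] - μ̄‖:
   by regularity when |S| >= δ|U| and trivially otherwise.  Splitting U by the sign
   of the bias bounds the absolute biases by 4(δ + e)|U|.  Irregular blocks cover
   fewer than δn sites and Σ_i |V_i| e_i < δn, so for every g the absolute biases sum
   to at most 9δn.  Averaging over x one coordinate at a time then shows that the
   average distance is O(δ), for every n >= 1. *)

Section Upd.
Variables (T : finType) (k : nat).

Definition upd (x : {ffun 'I_k -> T}) (j : 'I_k) (a : T) : {ffun 'I_k -> T} :=
  [ffun l => if l == j then a else x l].

Lemma upd_same x j a : upd x j a j = a.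
Proof. by rewrite ffunE eqxx. Qed.

Lemma upd_other x j a l : l != j -> upd x j a l = x l.
Proof. by rewrite ffunE => /negbTE ->. Qed.

Lemma upd_upd x j a b : upd (upd x j a) j b = upd x j b.
Proof. by apply/ffunP => l; rewrite !ffunE; case: (l == j). Qed.

Lemma upd_id x j : upd x j (x j) = x.
Proof. by apply/ffunP => l; rewrite !ffunE; case: eqP => // ->. Qed.

Lemma sum_upd (V : nmodType) (F : {ffun 'I_k -> T} -> V) j :
  \sum_x \sum_(a : T) F (upd x j a) = (\sum_x F x) *+ #|T|.
Proof.
pose swap p := (upd p.1 j p.2, p.1 j).
have swapK : involutive swap by move=> [x a]; rewrite /swap /= upd_upd upd_id upd_same.
rewrite pair_bigA (reindex_inj (inv_inj swapK)) /=.
under eq_bigr => p _ do rewrite upd_upd upd_id.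
by rewrite -(pair_bigA _ (fun x _ => F x)) -sumrMnl; apply: eq_bigr => x _; rewrite sumr_const.
Qed.

Lemma sum_le_upd (R : realDomainType) (F : {ffun 'I_k -> T} -> R) j (B : R) :
  (0 < #|T|)%N -> (forall x, \sum_a F (upd x j a) <= B * #|T|%:R) ->
  \sum_x F x <= B * (#|T| ^ k)%:R.
Proof.
move=> T0 hB; rewrite -(@ler_pM2r _ #|T|%:R) ?ltr0n // mulr_natr -(sum_upd _ j).
apply: le_trans (ler_sum _ (fun x _ => hB x)) _.
rewrite sumr_const card_ffun card_ord -[_ *+ _]mulr_natr natrX.
by rewrite le_eqVlt; apply/orP; left; apply/eqP; ring.
Qed.

End Upd.

Lemma norm_prodB_le (R : realDomainType) (k : nat) (f g : 'I_k -> R) :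
  (forall l, 0 <= f l <= 1) -> (forall l, 0 <= g l <= 1) ->
  `|\prod_l f l - \prod_l g l| <= \sum_l `|f l - g l|.
Proof.
elim: k f g => [|k IH] f g hf hg; first by rewrite !big_ord0 subrr normr0.
rewrite !big_ord_recr /=.
set P := \prod_(i < k) _; set Q := \prod_(i < k) _.
have hPQ := IH _ _ (fun l => hf (widen_ord (leqnSn k) l)) (fun l => hg (widen_ord (leqnSn k) l)).
have Q0 : 0 <= Q by apply: prodr_ge0 => i _; case/andP: (hg (widen_ord (leqnSn k) i)).
have Q1 : Q <= 1 by apply: prodr_ile1 => i _; apply: hg.
case/andP: (hf ord_max) => a0 a1; case/andP: (hg ord_max) => b0 b1.
rewrite (_ : P * f ord_max - Q * g ord_max =
   (P - Q) * f ord_max + Q * (f ord_max - g ord_max)); last by ring.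
apply: le_trans (ler_normD _ _) _; apply: lerD.
  by rewrite normrM (ger0_norm a0); apply: le_trans hPQ; rewrite ler_piMr.
by rewrite normrM (ger0_norm Q0) ler_piMl.
Qed.

Lemma sum_norm_le_subset_sums (R : realDomainType) (T : finType) (U : {set T})
    (F : T -> R) (B : R) :
  (forall S : {set T}, S \subset U -> `|\sum_(x in S) F x| <= B) ->
  \sum_(x in U) `|F x| <= 2 * B.
Proof.
move=> hB; pose Spos := [set x in U | 0 <= F x]; pose Sneg := [set x in U | F x < 0].
have hpos : \sum_(x in U | 0 <= F x) `|F x| = `|\sum_(x in Spos) F x|.
  rewrite ger0_norm; last by apply: sumr_ge0 => x; rewrite inE => /andP[].
  by apply: eq_big => [x|x /andP[_ hx]]; rewrite ?inE ?ger0_norm.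
have hneg : \sum_(x in U | ~~ (0 <= F x)) `|F x| = `|\sum_(x in Sneg) F x|.
  rewrite ler0_norm -?sumrN; last by apply: sumr_le0 => x; rewrite inE => /andP[_ /ltW].
  by apply: eq_big => [x|x /andP[_]]; rewrite ?inE -ltNge // => /ltW/ler0_norm.
rewrite (bigID (fun x => 0 <= F x)) /= hpos hneg.
have sub_pos : Spos \subset U by rewrite /Spos setIdE subsetIl.
have sub_neg : Sneg \subset U by rewrite /Sneg setIdE subsetIl.
have := hB _ sub_pos; have := hB _ sub_neg; lra.
Qed.

Lemma partition_index n m (V : 'I_m -> {set 'I_n}) :
  is_partition V -> exists part : 'I_n -> 'I_m,
    forall v i, (v \in V i) = (part v == i).
Proof.
case=> _ [hdisj hcov].
have hin v : exists i, v \in V i.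
  have : v \in \bigcup_(i < m) V i by rewrite hcov inE.
  by case/bigcupP=> i _ vi; exists i.
exists (fun v => xchoose (hin v)) => v i; have vp := xchooseP (hin v).
apply/idP/eqP => [vi|<- //]; apply/eqP; apply: contraT => ne.
by move: (disjointFr (hdisj _ _ ne) vp); rewrite vi.
Qed.

Lemma sum_by_part (V : nmodType) (T I : finType) (A : I -> {set T}) (part : T -> I)
    (F : I -> T -> V) :
  (forall x i, (x \in A i) = (part x == i)) ->
  \sum_x F (part x) x = \sum_i \sum_(x in A i) F i x.
Proof.
move=> hpart; rewrite (partition_big part predT) //=; apply: eq_bigr => i _.
by apply: eq_big => [x|x /eqP <-]; rewrite ?hpart.
Qed.

Section Basics.
Variables (R : realType) (Omega : finType).

Lemma tv_ge0 (T : finType) (p q : T -> R) : 0 <= tv p q.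
Proof. by rewrite /tv mulr_ge0 ?invr_ge0 // sumr_ge0. Qed.

Lemma normB_le_tv (T : finType) (p q : T -> R) t : `|p t - q t| <= 2 * tv p q.
Proof.
rewrite /tv mulrA mulfV ?pnatr_eq0 // mul1r (bigD1 t) //= lerDl.
exact: sumr_ge0.
Qed.

Variable n : nat.

Lemma sfrac_ge0 (s : config Omega n) S w : 0 <= sfrac s S w :> R.
Proof. by rewrite /sfrac divr_ge0. Qed.

Lemma sfrac_le1 (s : config Omega n) S w : sfrac s S w <= 1 :> R.
Proof.
rewrite /sfrac; have [->|hS] := eqVneq #|S| 0%N; first by rewrite invr0 mulr0.
rewrite ler_pdivrMr ?ltr0n ?lt0n // mul1r ler_nat.
by apply: subset_leq_card; apply/subsetP => x; rewrite inE => /andP[].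
Qed.

Lemma sum_eq_sfrac (s : config Omega n) (S : {set 'I_n}) w :
  \sum_(x in S) ((s x == w)%:R : R) = #|S|%:R * sfrac s S w.
Proof.
rewrite /sfrac; have [->|hS] := eqVneq S set0; first by rewrite big_set0 cards0 mul0r.
rewrite mulrC divfK ?pnatr_eq0 ?cards_eq0 // -natr_sum -sum1_card.
congr _%:R; rewrite big_mkcond [RHS]big_mkcond; apply: eq_bigr => x _.
by rewrite inE; case: (x \in S); case: (s x == w).
Qed.

End Basics.

Section Expectation.
Variables (R : realType) (Omega : finType) (n : nat) (mu : config Omega n -> R).

Lemma eq_expect X Y : X =1 Y -> expect mu X = expect mu Y.
Proof. by move=> h; apply: eq_bigr => s _; rewrite h. Qed.

Lemma expectD X Y : expect mu (fun s => X s + Y s) = expect mu X + expect mu Y.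
Proof. by rewrite /expect -big_split; apply: eq_bigr => s _; rewrite mulrDr. Qed.

Lemma expectZ c X : expect mu (fun s => c * X s) = c * expect mu X.
Proof. by rewrite /expect mulr_sumr; apply: eq_bigr => s _; rewrite mulrCA. Qed.

Hypothesis hmu : is_prob mu.

Lemma expect1 : expect mu (fun _ => 1) = 1.
Proof. by case: hmu => _ h; rewrite /expect -[RHS]h; apply: eq_bigr => s _; rewrite mulr1. Qed.

Lemma ler_expect X Y : (forall s, X s <= Y s) -> expect mu X <= expect mu Y.
Proof. by move=> h; apply: ler_sum => s _; rewrite ler_wpM2l //; case: hmu. Qed.

Lemma expect_ge0 X : (forall s, 0 <= X s) -> 0 <= expect mu X.
Proof. by move=> hX; apply: sumr_ge0 => s _; rewrite mulr_ge0 //; case: hmu. Qed.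

Lemma expect_le1 X : (forall s, X s <= 1) -> expect mu X <= 1.
Proof. by move=> hX; rewrite -expect1; exact: ler_expect. Qed.

Lemma ler_norm_expect X : `|expect mu X| <= expect mu (fun s => `|X s|).
Proof.
apply: le_trans (ler_norm_sum _ _ _) _; apply: ler_sum => s _.
by rewrite normrM ger0_norm //; case: hmu.
Qed.

End Expectation.

Section Bias.
Variables (R : realType) (Omega : finType) (n : nat) (mu : config Omega n -> R).
Hypothesis hmu : is_prob mu.

Definition bias (g : config Omega n -> R) (v : 'I_n) (w : Omega) (q : R) :=
  expect mu (fun s => g s * (s v == w)%:R) - expect mu g * q.

Lemma eq_bias g1 g2 v w q : g1 =1 g2 -> bias g1 v w q = bias g2 v w q.
Proof.
by move=> h; rewrite /bias (eq_expect mu h); congr (_ - _); apply: eq_expect => s; rewrite h.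
Qed.

Definition block_mean (U : {set 'I_n}) (w : Omega) :=
  expect mu (fun s => sfrac s U w).

Lemma block_mean_ge0_le1 U w : 0 <= block_mean U w <= 1.
Proof. by rewrite expect_ge0 ?expect_le1 // => s; rewrite ?sfrac_ge0 ?sfrac_le1. Qed.

Lemma marg_bias y w q : marg mu y w - q = bias (fun _ => 1) y w q.
Proof.
rewrite /bias expect1 // mul1r /marg /expect big_mkcond /=.
by congr (_ - _); apply: eq_bigr => s _; rewrite mul1r; case: (s y == w); rewrite ?mulr1 ?mulr0.
Qed.

Lemma marg_ge0_le1 y w : 0 <= marg mu y w <= 1.
Proof.
have := marg_bias y w 0; rewrite subr0 /bias mulr0 subr0 => ->.
by rewrite expect_ge0 ?expect_le1 // => s; rewrite mul1r ?ler0n ?lern1 ?leq_b1.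
Qed.

Lemma sum_bias (S : {set 'I_n}) g w q :
  \sum_(x in S) bias g x w q = #|S|%:R * expect mu (fun s => g s * (sfrac s S w - q)).
Proof.
rewrite /bias big_split /= sumrN sumr_const /expect exchange_big /=.
have -> : \sum_s \sum_(x in S) mu s * (g s * (s x == w)%:R) =
          \sum_s mu s * (g s * (#|S|%:R * sfrac s S w)).
  by apply: eq_bigr => s _; rewrite -sum_eq_sfrac !mulr_sumr.
rewrite -[(_ * q) *+ _]mulr_natl mulr_suml !mulr_sumr -sumrB.
by apply: eq_bigr => s _; ring.
Qed.

Lemma norm_bias_le1 g x w q : (forall s, 0 <= g s <= 1) -> 0 <= q <= 1 ->
  `|bias g x w q| <= 1.
Proof.
move=> hg /andP[q0 q1].
have a0 : 0 <= expect mu (fun s => g s * (s x == w)%:R).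
  by apply: expect_ge0 => // s; case/andP: (hg s) => g0 _; rewrite mulr_ge0.
have a1 : expect mu (fun s => g s * (s x == w)%:R) <= 1.
  apply: expect_le1 => // s; case/andP: (hg s) => g0 g1.
  by rewrite mulr_ile1 // ?ler0n // lern1 leq_b1.
have b0 : 0 <= expect mu g by apply: expect_ge0 => // s; case/andP: (hg s).
have b1 : expect mu g <= 1 by apply: expect_le1 => // s; case/andP: (hg s).
have c0 : 0 <= expect mu g * q by rewrite mulr_ge0.
have c1 : expect mu g * q <= 1 by rewrite mulr_ile1.
rewrite /bias ler_norml; apply/andP; split; lra.
Qed.

Lemma sum_norm_bias_le_card (U : {set 'I_n}) g w q :
  (forall s, 0 <= g s <= 1) -> 0 <= q <= 1 ->
  \sum_(x in U) `|bias g x w q| <= #|U|%:R.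
Proof.
move=> hg hq; apply: le_trans (_ : _ <= \sum_(x in U) 1) _; last by rewrite sumr_const.
by apply: ler_sum => x _; apply: norm_bias_le1.
Qed.

Lemma norm_sum_bias_subset (delta : R) (U S : {set 'I_n}) (q : Omega -> R) g w :
  regular_on mu delta U -> (forall v, 0 <= q v <= 1) ->
  (forall s, 0 <= g s <= 1) -> S \subset U ->
  `|\sum_(x in S) bias g x w (q w)| <=
    2 * (delta + expect mu (fun s => tv (sfrac s U) q)) * #|U|%:R.
Proof.
move=> hreg hq hg sSU; set e := expect mu _.
have e0 : 0 <= e by apply: expect_ge0 => // s; apply: tv_ge0.
have U0 : 0 <= #|U|%:R :> R := ler0n _ _.
have SU : #|S|%:R <= #|U|%:R :> R by rewrite ler_nat subset_leq_card.
have [large|small] := lerP (delta * #|U|%:R) #|S|%:R.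
- have hSU := hreg S sSU large.
  have dev : `|expect mu (fun s => g s * (sfrac s S w - q w))| <= 2 * (delta + e).
    apply: le_trans (ler_norm_expect _ _) _ => //.
    apply: (@le_trans _ _ (expect mu (fun s =>
      2 * tv (sfrac s S) (sfrac s U) + 2 * tv (sfrac s U) q))).
      apply: ler_expect => // s; case/andP: (hg s) => g0 g1.
      rewrite normrM (ger0_norm g0); apply: le_trans (ler_piMl _ g1) _ => //.
      by apply: le_trans (ler_distD (sfrac s U w) _ _) _; rewrite lerD ?normB_le_tv.
    rewrite expectD (expectZ _ 2 (fun s => tv (sfrac s S) (sfrac s U))).
    rewrite (expectZ _ 2 (fun s => tv (sfrac s U) q)) -/e; lra.
  rewrite sum_bias normrM ger0_norm // mulrC.
  by apply: ler_pM => //; lra.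
- apply: le_trans (ler_norm_sum _ _ _) _.
  apply: le_trans (sum_norm_bias_le_card _ _ hg (hq w)) _.
  have : 0 <= e * #|U|%:R by rewrite mulr_ge0.
  have : 0 <= #|S|%:R :> R := ler0n _ _.
  rewrite -mulrA (mulrDl delta); lra.
Qed.

Lemma sum_norm_bias_regular (delta : R) (U : {set 'I_n}) (q : Omega -> R) g w :
  regular_on mu delta U -> (forall v, 0 <= q v <= 1) ->
  (forall s, 0 <= g s <= 1) ->
  \sum_(x in U) `|bias g x w (q w)| <=
    4 * (delta + expect mu (fun s => tv (sfrac s U) q)) * #|U|%:R.
Proof.
move=> hreg hq hg.
have := sum_norm_le_subset_sums (fun S => norm_sum_bias_subset (S := S) w hreg hq hg).
by rewrite !mulrA -natrM.
Qed.

Lemma sum_norm_bias_partition m (V : 'I_m -> {set 'I_n}) (part : 'I_n -> 'I_m)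
    (delta : R) g w :
  (0 < n)%N -> (forall v i, (v \in V i) = (part v == i)) ->
  regular_wrt mu delta V ->
  \sum_(i < m) (#|V i|%:R / n%:R) *
     expect mu (fun s => tv (sfrac s (V i)) (block_mean (V i))) < delta ->
  (forall s, 0 <= g s <= 1) ->
  \sum_v `|bias g v w (block_mean (V (part v)) w)| <= 9 * delta * n%:R.
Proof.
move=> n0 hpart [J [hJ hreg]] hdisc hg.
pose e i := expect mu (fun s => tv (sfrac s (V i)) (block_mean (V i))).
have e0 i : 0 <= e i by apply: expect_ge0 => // s; apply: tv_ge0.
have d0 : 0 <= delta.
  apply: ltW; apply: le_lt_trans hdisc.
  by apply: sumr_ge0 => i _; apply: mulr_ge0 (e0 i); rewrite divr_ge0.
have cardV : \sum_i (#|V i|%:R : R) = n%:R.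
  rewrite -[in RHS](card_ord n) -sum1_card natr_sum (sum_by_part (fun _ _ => 1) hpart).
  by apply: eq_bigr => i _; rewrite -sum1_card natr_sum.
have hdisc' : \sum_i e i * #|V i|%:R <= delta * n%:R.
  have -> : \sum_i e i * #|V i|%:R = n%:R * \sum_i (#|V i|%:R / n%:R) * e i.
    by rewrite mulr_sumr; apply: eq_bigr => i _; field; rewrite pnatr_eq0 -lt0n.
  by rewrite mulrC ler_wpM2r ?ler0n ?ltW.
rewrite (sum_by_part (fun i v => `|bias g v w (block_mean (V i) w)|) hpart).
apply: (@le_trans _ _ (\sum_i
    (4 * (delta + e i) * #|V i|%:R + (i \notin J)%:R * #|V i|%:R))).
  apply: ler_sum => i _; case: (boolP (i \in J)) => iJ /=.
    rewrite mul0r addr0; apply: sum_norm_bias_regular (hreg i iJ) _ hg.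
    exact: block_mean_ge0_le1.
  apply: le_trans (sum_norm_bias_le_card _ _ hg (block_mean_ge0_le1 _ _)) _.
  by rewrite mul1r lerDr !mulr_ge0 ?addr_ge0.
have hirr : \sum_i (i \notin J)%:R * (#|V i|%:R : R) < delta * n%:R.
  apply: le_lt_trans hJ; rewrite [leRHS]big_mkcond.
  by apply: ler_sum => i _; case: (i \notin J); rewrite ?mul1r ?mul0r.
rewrite big_split /=.
have -> : \sum_i 4 * (delta + e i) * #|V i|%:R =
          4 * (delta * \sum_i #|V i|%:R + \sum_i e i * #|V i|%:R).
  rewrite [delta * _]mulr_sumr -big_split mulr_sumr /=.
  by apply: eq_bigr => i _; ring.
rewrite cardV; lra.
Qed.

End Bias.

Section Telescoping.
Variables (R : realType) (Omega : finType) (n k : nat).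

Definition agree_before (x : {ffun 'I_k -> 'I_n}) (t : {ffun 'I_k -> Omega})
    (j : nat) (s : config Omega n) : bool :=
  [forall l : 'I_k, (l < j)%N ==> (s (x l) == t l)].

Lemma agree_before0 x t s : agree_before x t 0 s.
Proof. exact/forallP. Qed.

Lemma agree_before_all x t s : agree_before x t k s = [forall l, s (x l) == t l].
Proof. by apply: eq_forallb => l; rewrite ltn_ord. Qed.

Lemma agree_beforeS x t (j : 'I_k) s :
  agree_before x t j.+1 s = agree_before x t j s && (s (x j) == t j).
Proof.
apply/forallP/andP => [h|[/forallP h1 h2] l].
  split; last by move/implyP: (h j); apply.
  by apply/forallP => l; apply/implyP => hl; move/implyP: (h l); apply; rewrite ltnW.
apply/implyP; rewrite ltnS leq_eqVlt => /orP[/eqP/val_inj -> //|hl].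
by move/implyP: (h1 l); apply.
Qed.

Lemma agree_before_upd x t (j : 'I_k) v s :
  agree_before (upd x j v) t j s = agree_before x t j s.
Proof.
apply: eq_forallb => l; case: (ltnP l j) => //= hl.
by rewrite upd_other // neq_ltn hl.
Qed.

Variables (mu : config Omega n -> R) (q : 'I_n -> Omega -> R).
Hypotheses (hmu : is_prob mu) (hq : forall v w, 0 <= q v w <= 1).

Lemma norm_joint_sub_prod_le x t :
  `|joint mu x t - \prod_l q (x l) (t l)| <=
  \sum_(j < k) `|bias mu (fun s => (agree_before x t j s)%:R) (x j) (t j) (q (x j) (t j))|.
Proof.
pose a (j : nat) := expect mu (fun s => (agree_before x t j s)%:R) *
   \prod_(l < k | (j <= l)%N) q (x l) (t l).
have a0 : a 0%N = \prod_l q (x l) (t l).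
  rewrite /a (eq_expect mu (Y := fun _ => 1)) ?expect1 ?mul1r // => s.
  by rewrite agree_before0.
have ak : a k = joint mu x t.
  rewrite /a big_pred0 => [|l]; last by rewrite leqNgt ltn_ord.
  rewrite mulr1 /joint /expect [RHS]big_mkcond /=; apply: eq_bigr => s _.
  by rewrite agree_before_all; case: [forall _, _]; rewrite ?mulr1 ?mulr0.
have step (j : 'I_k) : a j.+1 - a j =
    bias mu (fun s => (agree_before x t j s)%:R) (x j) (t j) (q (x j) (t j)) *
    \prod_(l < k | (j < l)%N) q (x l) (t l).
  rewrite /a [in X in _ - X](bigD1 j) //=.
  have -> : \prod_(l < k | (j <= l)%N && (l != j)) q (x l) (t l) =
            \prod_(l < k | (j < l)%N) q (x l) (t l).
    by apply: eq_bigl => l; rewrite ltn_neqAle andbC eq_sym.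
  rewrite (eq_expect mu (Y := fun s => (agree_before x t j s)%:R * (s (x j) == t j)%:R)).
    by rewrite /bias; ring.
  by move=> s; rewrite agree_beforeS -natrM mulnb.
rewrite -a0 -ak -(telescope_sumr _ (leq0n k)) big_mkord.
apply: le_trans (ler_norm_sum _ _ _) _; apply: ler_sum => j _.
rewrite step normrM ler_piMr // ger0_norm.
  by apply: prodr_ile1 => l _; apply: hq.
by apply: prodr_ge0 => l _; case/andP: (hq (x l) (t l)).
Qed.

End Telescoping.

Section Symmetry.
Variables (R : realType) (Omega : finType) (n k : nat) (mu : config Omega n -> R).
Variables (q : 'I_n -> Omega -> R) (beta : R).
Hypotheses (hmu : is_prob mu) (hq : forall v w, 0 <= q v w <= 1).
Hypothesis hbias : forall g w, (forall s, 0 <= g s <= 1) ->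
  \sum_v `|bias mu g v w (q v w)| <= beta * n%:R.

Lemma tv_joint_prod_marg_le x :
  tv (joint mu x) (prod_marg mu x) <= 2^-1 * \sum_t \sum_(j < k)
    (`|bias mu (fun s => (agree_before x t j s)%:R) (x j) (t j) (q (x j) (t j))| +
     `|bias mu (fun _ => 1) (x j) (t j) (q (x j) (t j))|).
Proof.
rewrite /tv ler_wpM2l ?invr_ge0 ?ler0n //; apply: ler_sum => t _.
rewrite big_split /=.
apply: le_trans (ler_distD (\prod_l q (x l) (t l)) _ _) _.
apply: lerD; first exact: norm_joint_sub_prod_le.
rewrite distrC; apply: le_trans (norm_prodB_le _ _) _ => [l|l|].
- exact: marg_ge0_le1.
- exact: hq.
- by apply: ler_sum => j _; rewrite marg_bias.
Qed.

Lemma sum_norm_bias_coord (G : {ffun 'I_k -> 'I_n} -> config Omega n -> R)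
    (j : 'I_k) w :
  (0 < n)%N -> (forall x v, G (upd x j v) =1 G x) ->
  (forall x s, 0 <= G x s <= 1) ->
  \sum_x `|bias mu (G x) (x j) w (q (x j) w)| <= beta * (n ^ k)%:R.
Proof.
move=> n0 hG hG01; rewrite -[X in (X ^ k)%N](card_ord n).
apply: (sum_le_upd (j := j)); rewrite ?card_ord // => x.
under eq_bigr => v _ do rewrite upd_same (eq_bias _ _ _ _ (hG x v)).
exact: hbias.
Qed.

Lemma sum_tv_joint_prod_marg_le : (0 < n)%N ->
  \sum_(x : {ffun 'I_k -> 'I_n}) tv (joint mu x) (prod_marg mu x) <=
  #|{ffun 'I_k -> Omega}|%:R * k%:R * beta * (n ^ k)%:R.
Proof.
move=> n0; apply: le_trans (ler_sum _ (fun x _ => tv_joint_prod_marg_le x)) _.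
rewrite -mulr_sumr exchange_big /=.
under eq_bigr => t _ do rewrite exchange_big /=.
apply: (@le_trans _ _ (2^-1 * \sum_(t : {ffun 'I_k -> Omega}) \sum_(j < k)
          (beta * (n ^ k)%:R + beta * (n ^ k)%:R))).
  rewrite ler_wpM2l ?invr_ge0 ?ler0n //.
  apply: ler_sum => t _; apply: ler_sum => j _; rewrite big_split /=.
  apply: lerD; apply: sum_norm_bias_coord => //.
  - by move=> x v s; rewrite agree_before_upd.
  - by move=> x s; rewrite ler0n lern1 leq_b1.
  - by move=> _ _; rewrite ler01 lexx.
rewrite !sumr_const card_ord -[_ *+ k]mulr_natl -[_ *+ #|_|]mulr_natl.
by rewrite le_eqVlt; apply/orP; left; apply/eqP; field.
Qed.

End Symmetry.

Unset Implicit Arguments.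

Theorem lemma2p8 (R : realType) (Omega : finType) (k : nat) (eps : R) :
  (0 < #|Omega|)%N -> (2 <= k)%N -> 0 < eps ->
  exists delta : R, 0 < delta /\
  exists N : nat, forall n : nat, (N <= n)%N ->
  forall (mu : config Omega n -> R) (m : nat) (V : 'I_m -> {set 'I_n}),
    is_prob mu ->
    is_partition V ->
    regular_wrt mu delta V ->
    let mubar := fun (i : 'I_m) (w : Omega) =>
      expect mu (fun s => sfrac s (V i) w) in
    \sum_(i < m) (#|V i|%:R / n%:R) *
       expect mu (fun s => tv (sfrac s (V i)) (mubar i)) < delta ->
    eps_k_symmetric mu eps k.
Proof.
move=> _ _ eps0.
pose C : R := 9 * #|{ffun 'I_k -> Omega}|%:R * k%:R.
have C0 : 0 <= C by rewrite !mulr_ge0 ?ler0n.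
exists (eps / (C + 1)); split; first by rewrite divr_gt0 //; lra.
exists 1%N => n n0 mu m V hmu hpart hreg mubar hdisc.
have [part hpartE] := partition_index hpart.
have hsum := sum_tv_joint_prod_marg_le k hmu
  (fun v => block_mean_ge0_le1 hmu (V (part v)))
  (fun g w => sum_norm_bias_partition hmu w n0 hpartE hreg hdisc) n0.
rewrite /eps_k_symmetric -natrX mulrC ltr_pdivrMr ?ltr0n ?expn_gt0 ?n0 //.
apply: le_lt_trans hsum _; rewrite ltr_pM2r ?ltr0n ?expn_gt0 ?n0 //.
rewrite (_ : _ * _ * _ = C * eps / (C + 1)).
  by rewrite ltr_pdivrMr; nra.
by rewrite /C; field; apply: lt0r_neq0; rewrite -/C; lra.
Qed.
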